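(* Let $G$ be a finite group, let $g\in G$, and let $\phi=\sum_{\chi\in\mathrm{Irr}(G)}a_\chi\chi$ be a non-negative virtual character of $G$. Then $$c(g)\;\le\;\mathrm{Prob}\big([a,b]^{-1}g\in\ker(\phi)\big)\;=\;\mathrm{Prob}\big(\xi_{g,\phi}=\phi(1)\big),$$ and if moreover $\phi$ is exact, then $c(g)=\mathrm{Prob}\big(\xi_{g,\phi}=\phi(1)\big)$.
   Context: $G$ is a finite group of order $m$; $\mathrm{Irr}(G)$ is the set of irreducible complex characters of $G$. $G\times G$ is a probability space with the uniform measure (mass $1/m^2$ at each point), and $\mathrm{Prob}$ refers to this measure, with $(a,b)$ the random pair. For $g\in G$, $c(g)=|\{(x,y)\in G\times G:[x,y]=g\}|/|G\times G|$. A virtual character $\phi=\sum_{\chi\in\mathrm{Irr}(G)}a_\chi\chi$ with $a_\chi\in\mathbb{C}$ is called non-negative if (a) $\mathrm{Re}(\phi(h))\ge 0$ for all $h\in G$, and (b) all coefficients $a_\chi$ are non-negative real numbers and at least one is non-zero. Its kernel is $\ker(\phi)=\{h\in G:\phi(h)=\phi(1)\}$, and a non-negative virtual character is called exact if $\ker(\phi)=\{1\}$. For $g\in G$, the real random variable $\xi_{g,\phi}$ on $G\times G$ is $\xi_{g,\phi}(a,b)=\mathrm{Re}\big(\phi([a,b]^{-1}g)\big)$. *)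

From HB Require Import structures.
From mathcomp Require Import all_boot all_order all_algebra all_fingroup all_solvable all_field all_character.
Set Implicit Arguments. Unset Strict Implicit. Unset Printing Implicit Defensive.
Import Order.TTheory GRing.Theory Num.Theory.
Local Open Scope ring_scope.
Local Open Scope group_scope.

Section Defs.
Variables (gT : finGroupType) (G : {group gT}).

Definition vchar (a : Iirr G -> algC) : 'CF(G) := (\sum_i a i *: 'chi[G]_i)%R.

Definition nonneg_coefs (a : Iirr G -> algC) : Prop :=
  [/\ forall h, h \in G -> (0 <= 'Re (vchar a h))%R,
      forall i, (0 <= a i)%R
    & exists i, a i != 0%R].

Definition vker (phi : 'CF(G)) : {set gT} := [set h in G | phi h == phi 1].

Definition exact (phi : 'CF(G)) : Prop := vker phi = [set 1].

Definition probGG (E : gT -> gT -> bool) : algC :=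
  (#|[set p : gT * gT | [&& p.1 \in G, p.2 \in G & E p.1 p.2]]|%:R
     / (#|G| ^ 2)%:R)%R.

Definition cprob (g : gT) : algC := probGG (fun x y => [~ x, y] == g).

Definition xi (phi : 'CF(G)) (g x y : gT) : algC := 'Re (phi ([~ x, y]^-1 * g)).

End Defs.

(* Since every irreducible character satisfies |chi h| <= chi 1 and the
   coefficients are non-negative, |phi h| <= phi 1 for all h.  Hence
   Re (phi h) = phi 1 forces phi h = phi 1, so the events
   "[a,b]^-1 g in ker phi" and "xi = phi 1" coincide; the first contains
   "[a,b] = g", with equality when ker phi is trivial. *)

From HB Require Import structures.
From mathcomp Require Import all_boot all_order all_algebra all_fingroup all_solvable all_field all_character.
Import Order.TTheory GRing.Theory Num.Theory.
Local Open Scope ring_scope.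

Lemma normC_le_Re_eq (z : algC) : `|z| <= 'Re z -> 'Re z = z.
Proof.
move=> le_z_Re; have [le_Re_z eq_Re_z] := leif_Re_Creal z.
have z_ge0 : 0 <= z by rewrite -eq_Re_z eq_le le_Re_z.
exact/Creal_ReP/ger0_real.
Qed.

Section ProbGG.
Variables (gT : finGroupType) (G : {group gT}).

Lemma eq_probGG (E E' : gT -> gT -> bool) :
  (forall x y, x \in G -> y \in G -> E x y = E' x y) -> probGG G E = probGG G E'.
Proof.
move=> eqE; rewrite /probGG; congr (_%:R / _); apply: eq_card => -[x y].
by rewrite !inE /=; case xG: (x \in G); case yG: (y \in G); rewrite //= eqE.
Qed.

Lemma le_probGG (E E' : gT -> gT -> bool) :
  (forall x y, x \in G -> y \in G -> E x y -> E' x y) -> probGG G E <= probGG G E'.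
Proof.
move=> subE; rewrite /probGG ler_wpM2r ?invr_ge0 ?ler0n // ler_nat.
apply/subset_leq_card/subsetP => -[x y]; rewrite !inE /= => /and3P[xG yG Exy].
by rewrite xG yG subE.
Qed.

End ProbGG.

Section NonnegVchar.
Variables (gT : finGroupType) (G : {group gT}) (a : Iirr G -> algC).
Hypothesis a_ge0 : forall i, 0 <= a i.

Lemma norm_vchar_le1 h : `|vchar a h| <= vchar a 1%g.
Proof.
rewrite /vchar !sum_cfunE (le_trans (ler_norm_sum _ _ _)) // ler_sum // => i _.
rewrite !cfunE normrM ger0_norm // ler_wpM2l //.
exact/char1_ge_norm/irr_char.
Qed.

Lemma vchar1_ge0 : 0 <= vchar a 1%g.
Proof. exact: le_trans (normr_ge0 _) (norm_vchar_le1 1%g). Qed.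

Lemma vker_vcharE h :
  h \in G -> (h \in vker (vchar a)) = ('Re (vchar a h) == vchar a 1%g).
Proof.
move=> hG; rewrite inE hG; apply/eqP/eqP => [-> | Re_phi_h].
  exact/Creal_ReP/ger0_real/vchar1_ge0.
rewrite -Re_phi_h normC_le_Re_eq // Re_phi_h.
exact: norm_vchar_le1.
Qed.

End NonnegVchar.

Theorem lemma1 (gT : finGroupType) (G : {group gT}) (g : gT) (a : Iirr G -> algC) :
  g \in G -> nonneg_coefs a ->
  let phi := vchar a in
  [/\ cprob G g <= probGG G (fun x y => (([~ x, y]^-1 * g)%g \in vker phi)),
      probGG G (fun x y => (([~ x, y]^-1 * g)%g \in vker phi))
        = probGG G (fun x y => xi phi g x y == phi 1%g)
    & exact phi -> cprob G g = probGG G (fun x y => xi phi g x y == phi 1%g)].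
Proof.
move=> gG [_ a_ge0 _] phi.
have vker_xiE : probGG G (fun x y => (([~ x, y]^-1 * g)%g \in vker phi))
              = probGG G (fun x y => xi phi g x y == phi 1%g).
  apply: eq_probGG => x y xG yG.
  by rewrite vker_vcharE // groupM ?groupV ?groupR.
split=> //.
  apply: le_probGG => x y _ _ /eqP <-.
  by rewrite mulVg inE group1 eqxx.
move=> phi_exact; rewrite -vker_xiE; apply: eq_probGG => x y _ _.
by rewrite phi_exact inE -eq_mulVg1.
Qed.
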